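(* Let $N,M_d\ge 1$, $\varepsilon\ge0$, and $\tilde{\mathbf H}_{rd}=[\tilde{\mathbf h}_1,\dots,\tilde{\mathbf h}_N]\in\mathbb C^{M_d\times N}$. Fix any $\mathbf r\in\mathbb C^{M_d}$ with $\|\mathbf r\|_2=1$, set $\alpha_i=|\tilde{\mathbf h}_i^H\mathbf r|$ and $\chi(N)=\sum_{i=1}^N\alpha_i^2$, and let $\Omega(k^\circ)$ denote the optimal value of $$\max_{\mathbf w\in\mathbb C^N}\ |\mathbf r^H\tilde{\mathbf H}_{rd}\mathbf w|-\varepsilon\|\mathbf w\|_2\quad\text{s.t. } |w_i|\le1,\ i=1,\dots,N$$ (equivalently of $\max\ \sum_{i=1}^N|w_i|\alpha_i-\varepsilon\sqrt{\sum_{i=1}^N|w_i|^2}$ over $|w_i|\le 1$). Then $\Omega(k^\circ)>0$ if and only if $\varepsilon<\sqrt{\chi(N)}$; moreover $\sqrt{\chi(N)}\leq \sqrt{\lambda_{\max}(\tilde {\mathbf H}_{rd}\tilde {\mathbf H}_{rd}^H)}$.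
   Context: $\lambda_{\max}(\cdot)$ denotes the largest eigenvalue of a Hermitian matrix; $\tilde{\mathbf h}_i$ is the $i$-th column of $\tilde{\mathbf H}_{rd}$; $w_i$ the $i$-th entry of $\mathbf w$; $(\cdot)^H$ conjugate transpose; $\|\cdot\|_2$ Euclidean norm. *)

From HB Require Import structures.
From mathcomp Require Import all_boot all_order all_algebra.
From mathcomp Require Import complex.
From mathcomp Require Import classical_sets reals.
Set Implicit Arguments. Unset Strict Implicit. Unset Printing Implicit Defensive.
Import Order.TTheory GRing.Theory Num.Theory.
Local Open Scope ring_scope.
Local Open Scope classical_set_scope.

Notation normc := ComplexField.Normc.normc.

Definition mxH (R : rcfType) m n (A : 'M[R[i]]_(m, n)) : 'M[R[i]]_(n, m) :=
  \matrix_(i < n, j < m) conjc (A j i).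

Definition vnorm2 (R : rcfType) n (v : 'cV[R[i]]_n) : R :=
  Num.sqrt (\sum_(i < n) (normc (v i 0)) ^+ 2).

Definition alpha (R : rcfType) Md N (H : 'M[R[i]]_(Md, N)) (r : 'cV[R[i]]_Md)
  (i : 'I_N) : R := normc ((mxH (col i H) *m r) 0 0).

Definition chi (R : rcfType) Md N (H : 'M[R[i]]_(Md, N)) (r : 'cV[R[i]]_Md) : R :=
  \sum_(i < N) (alpha H r i) ^+ 2.

Definition objective (R : rcfType) Md N (H : 'M[R[i]]_(Md, N)) (r : 'cV[R[i]]_Md)
  (eps : R) (w : 'cV[R[i]]_N) : R :=
  normc ((mxH r *m H *m w) 0 0) - eps * vnorm2 w.

Definition feasible (R : rcfType) N (w : 'cV[R[i]]_N) : Prop :=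
  forall i : 'I_N, normc (w i 0) <= 1.

(* optimal value Omega(k°) = sup of the objective over the feasible set
   (the maximum is attained since the feasible set is compact) *)
Definition Omega (R : realType) Md N (H : 'M[R[i]]_(Md, N)) (r : 'cV[R[i]]_Md)
  (eps : R) : R :=
  sup [set objective H r eps w | w in [set w | feasible w]].

(* largest eigenvalue of a Hermitian matrix (its eigenvalues are real) *)
Definition lambda_max (R : realType) n (A : 'M[R[i]]_n) : R :=
  sup [set x : R | eigenvalue A (x%:C)%C].

(* By the triangle and Cauchy-Schwarz inequalities,
   |r^H H w| <= sum_i alpha_i |w_i| <= sqrt(chi) ||w||, so the objective is at
   most (sqrt(chi) - eps) ||w|| and Omega <= 0 once eps >= sqrt(chi).
   Conversely the normalised matched filter w = (r^H H)^H / sqrt(chi) is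
   feasible, because alpha_i <= sqrt(chi), and attains sqrt(chi) - eps.
   Finally chi = ||H^H r||^2 = r^H (H H^H) r; diagonalising the Hermitian
   matrix H H^H by a unitary P turns this into sum_j lambda_j |(P r)_j|^2 with
   sum_j |(P r)_j|^2 = ||r||^2 = 1, which is at most the largest eigenvalue. *)

From HB Require Import structures.
From mathcomp Require Import all_boot all_order all_algebra.
From mathcomp Require Import complex.
From mathcomp Require Import classical_sets reals.
From mathcomp Require Import ring lra.
Import Order.TTheory GRing.Theory Num.Theory.
Local Open Scope ring_scope.
Local Open Scope sesquilinear_scope.
Local Open Scope classical_set_scope.

Section ComplexNorm.
Context {R : rcfType}.
Implicit Types z : R[i].

Lemma normc_ge0 z : 0 <= normc z.
Proof. by case: z => a b; rewrite sqrtr_ge0. Qed.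

Lemma normc_conj z : normc (conjc z) = normc z.
Proof. by case: z => a b; rewrite /= sqrrN. Qed.

Lemma normc_real (x : R) : normc (x%:C)%C = `|x|.
Proof. by rewrite /= expr0n addr0 sqrtr_sqr. Qed.

Lemma mulc_conj z : z * conjc z = ((normc z ^+ 2)%:C)%C.
Proof.
by case: z => a b; rewrite sqr_sqrtr ?addr_ge0 ?sqr_ge0 //; apply/eqP;
  rewrite eq_complex /=; apply/andP; split; apply/eqP; ring.
Qed.

Lemma normc_sum n (f : 'I_n -> R[i]) : normc (\sum_i f i) <= \sum_i normc (f i).
Proof.
elim/big_ind2: _ => [|z1 y1 z2 y2 le1 le2|//]; first by rewrite ComplexField.Normc.normc0.
exact: le_trans (le_normcD _ _) (lerD le1 le2).
Qed.

End ComplexNorm.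

Lemma sum_mul_sqr_le (R : realDomainType) n (a b : 'I_n -> R) :
  (\sum_i a i * b i) ^+ 2 <= (\sum_i a i ^+ 2) * (\sum_i b i ^+ 2).
Proof.
have lagrange : \sum_i \sum_j (a i * b j - a j * b i) ^+ 2 =
    2 * ((\sum_i a i ^+ 2) * (\sum_i b i ^+ 2) - (\sum_i a i * b i) ^+ 2).
  have -> : \sum_i \sum_j (a i * b j - a j * b i) ^+ 2 =
      \sum_i \sum_j (a i ^+ 2 * b j ^+ 2) + \sum_i \sum_j (a j ^+ 2 * b i ^+ 2)
      - 2 * \sum_i \sum_j ((a i * b i) * (a j * b j)).
    rewrite mulr_sumr -big_split -sumrB /=; apply: eq_bigr => i _.
    rewrite mulr_sumr -big_split -sumrB /=; apply: eq_bigr => j _; ring.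
  rewrite [X in _ + X - _]exchange_big /= expr2 !big_distrlr /=; ring.
have : 0 <= \sum_i \sum_j (a i * b j - a j * b i) ^+ 2.
  by do 2!apply: sumr_ge0 => ? _; exact: sqr_ge0.
by rewrite lagrange pmulr_rge0 // subr_ge0.
Qed.

Lemma sum_mul_le_sqrt (R : rcfType) n (a b : 'I_n -> R) :
  \sum_i a i * b i <= Num.sqrt (\sum_i a i ^+ 2) * Num.sqrt (\sum_i b i ^+ 2).
Proof.
have sumsq_ge0 (c : 'I_n -> R) : 0 <= \sum_i c i ^+ 2.
  by apply: sumr_ge0 => i _; exact: sqr_ge0.
rewrite -sqrtrM //; apply: le_trans (ler_norm _) _.
by rewrite -sqrtr_sqr ler_sqrt ?mulr_ge0 ?sum_mul_sqr_le.
Qed.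

Lemma mxHE (R : rcfType) m n (M : 'M[R[i]]_(m, n)) : mxH M = M ^t*.
Proof. by apply/matrixP => i j; rewrite !mxE. Qed.

Section ColumnVectors.
Context {R : rcfType} {n : nat}.
Implicit Types v : 'cV[R[i]]_n.

Lemma vnorm2_ge0 v : 0 <= vnorm2 v.
Proof. exact: sqrtr_ge0. Qed.

Lemma sqr_vnorm2 v : vnorm2 v ^+ 2 = \sum_j normc (v j 0) ^+ 2.
Proof. by rewrite sqr_sqrtr // sumr_ge0 // => j _; exact: sqr_ge0. Qed.

Lemma dotmx_vnorm2 v : (v ^t* *m v) 0 0 = ((vnorm2 v ^+ 2)%:C)%C.
Proof.
rewrite sqr_vnorm2 mxE rmorph_sum; apply: eq_bigr => j _.
by rewrite !mxE mulrC mulc_conj.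
Qed.

Lemma vnorm2_unitary {P : 'M[R[i]]_n} v :
  P \is unitarymx -> vnorm2 (P *m v) = vnorm2 v.
Proof.
move=> Pu; rewrite /vnorm2 -!sqr_vnorm2; congr Num.sqrt; apply: complexI.
rewrite -!dotmx_vnorm2 trmx_mul map_mxM -(invmx_unitary Pu) mulmxA.
by rewrite -[_ *m invmx P *m P]mulmxA mulVmx ?unitarymx_unit // mulmx1.
Qed.

End ColumnVectors.

Section Gain.
Context {R : rcfType} {Md N : nat} (H : 'M[R[i]]_(Md, N)) (r : 'cV[R[i]]_Md).

Lemma alphaE i : alpha H r i = normc ((mxH r *m H) 0 i).
Proof.
rewrite /alpha -normc_conj !mxE rmorph_sum; congr normc; apply: eq_bigr => k _.
by rewrite !mxE rmorphM /= conjcK mulrC.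
Qed.

Lemma alpha_ge0 i : 0 <= alpha H r i.
Proof. exact: normc_ge0. Qed.

Lemma chi_ge0 : 0 <= chi H r.
Proof. by apply: sumr_ge0 => i _; exact: sqr_ge0. Qed.

Lemma alpha_le_sqrt_chi i : alpha H r i <= Num.sqrt (chi H r).
Proof.
rewrite -(ger0_norm (alpha_ge0 i)) -sqrtr_sqr ler_sqrt ?chi_ge0 // /chi (bigD1 i) //=.
by rewrite lerDl sumr_ge0 // => j _; exact: sqr_ge0.
Qed.

Lemma chi_vnorm2 : chi H r = vnorm2 (H ^t* *m r) ^+ 2.
Proof.
rewrite sqr_vnorm2; apply: eq_bigr => i _; congr (normc _ ^+ 2).
by rewrite !mxE; apply: eq_bigr => k _; rewrite !mxE.
Qed.

Lemma gain_le_sqrt_chi w :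
  normc ((mxH r *m H *m w) 0 0) <= Num.sqrt (chi H r) * vnorm2 w.
Proof.
rewrite mxE; apply: le_trans (normc_sum _ _) _.
under eq_bigr => i _ do rewrite ComplexField.Normc.normcM -alphaE.
exact: sum_mul_le_sqrt.
Qed.

Lemma gain_le_sum_alpha w :
  feasible w -> normc ((mxH r *m H *m w) 0 0) <= \sum_i alpha H r i.
Proof.
move=> feas_w; rewrite mxE; apply: le_trans (normc_sum _ _) _.
apply: ler_sum => i _; rewrite ComplexField.Normc.normcM -alphaE.
exact: ler_piMr (alpha_ge0 i) (feas_w i).
Qed.

Lemma matched_filter_objective eps : 0 < chi H r ->
  exists2 w, feasible w & objective H r eps w = Num.sqrt (chi H r) - eps.
Proof.
move=> chi_gt0; set c := Num.sqrt (chi H r).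
have c_gt0 : 0 < c by rewrite sqrtr_gt0.
pose w : 'cV[R[i]]_N := \col_i ((c^-1)%:C%C * conjc ((mxH r *m H) 0 i)).
have normc_w i : normc (w i 0) = alpha H r i / c.
  rewrite mxE ComplexField.Normc.normcM normc_real normc_conj -alphaE mulrC.
  by rewrite ger0_norm // invr_ge0 ltW.
exists w => [i | ].
  by rewrite normc_w ler_pdivrMr // mul1r alpha_le_sqrt_chi.
have gain_w : (mxH r *m H *m w) 0 0 = ((chi H r / c)%:C)%C.
  rewrite mxE /chi mulrC rmorphM rmorph_sum mulr_sumr; apply: eq_bigr => i _.
  by rewrite [w i 0]mxE /= mulrCA mulc_conj -alphaE.
have chi_div_c : chi H r / c = c.
  by rewrite -{1}(sqr_sqrtr chi_ge0) -/c expr2 mulfK ?gt_eqF.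
have vnorm2_w : vnorm2 w = 1.
  rewrite /vnorm2; under eq_bigr => i _ do rewrite normc_w expr_div_n.
  by rewrite -mulr_suml -/(chi H r) sqr_sqrtr ?chi_ge0 // mulfV ?gt_eqF // sqrtr1.
by rewrite /objective gain_w chi_div_c normc_real vnorm2_w mulr1 ger0_norm // ltW.
Qed.

End Gain.

Section OptimalValue.
Variables (R : realType) (Md N : nat) (H : 'M[R[i]]_(Md, N)) (r : 'cV[R[i]]_Md).
Variables (eps : R) (eps_ge0 : 0 <= eps).

Let values := [set objective H r eps w | w in [set w : 'cV[R[i]]_N | feasible w]].

Let values_nonempty : values !=set0.
Proof.
by exists (objective H r eps 0), 0 => // i; rewrite mxE ComplexField.Normc.normc0.
Qed.

Let has_sup_values : has_sup values.
Proof.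
split=> //; exists (\sum_i alpha H r i) => _ [w feas_w <-]; rewrite /objective.
have := gain_le_sum_alpha H r w feas_w; have := mulr_ge0 eps_ge0 (vnorm2_ge0 w).
lra.
Qed.

Lemma Omega_le0 : Num.sqrt (chi H r) <= eps -> Omega H r eps <= 0.
Proof.
move=> le_chi_eps; apply: ge_sup => // _ [w _ <-].
rewrite /objective subr_le0.
exact: le_trans (gain_le_sqrt_chi H r w) (ler_wpM2r (vnorm2_ge0 w) le_chi_eps).
Qed.

Lemma Omega_gt0 : eps < Num.sqrt (chi H r) -> 0 < Omega H r eps.
Proof.
move=> lt_eps_chi; have : 0 < chi H r by rewrite -sqrtr_gt0 (le_lt_trans eps_ge0).
case/(matched_filter_objective H r eps) => w feas_w obj_w.
apply: lt_le_trans (sup_upper_bound has_sup_values (ex_intro2 _ _ w feas_w obj_w)).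
by rewrite subr_gt0.
Qed.

Lemma Omega_gt0_iff : 0 < Omega H r eps <-> eps < Num.sqrt (chi H r).
Proof.
split=> [Omega_pos | ]; last exact: Omega_gt0.
by rewrite ltNge; apply: contraTN Omega_pos => /Omega_le0; rewrite leNgt.
Qed.

End OptimalValue.

Section Eigenvalues.
Context {F : fieldType} {n : nat}.

Lemma eigenvalue_diag_mx (d : 'rV[F]_n) a :
  eigenvalue (diag_mx d) a <-> exists j, a = d 0 j.
Proof.
split=> [/eigenvalueP [v v_eigen v_neq0] | [j ->]].
  have [j vj_neq0] : exists j, v 0 j != 0.
    apply/existsP; apply: contraNT v_neq0 => /existsPn v0.
    by apply/eqP/rowP => j; rewrite mxE; apply/eqP/negPn/v0.
  exists j; apply: (mulIf vj_neq0).
  by have := congr1 (fun u : 'rV_n => u 0 j) v_eigen; rewrite mul_mx_diag !mxE mulrC.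
apply/eigenvalueP; exists (delta_mx 0 j).
  by rewrite -rowE row_diag_mx.
by apply/eqP => /matrixP /(_ 0 j); rewrite !mxE !eqxx /= => /eqP; rewrite oner_eq0.
Qed.

Lemma eigenvalue_conj_unitmx (P f : 'M[F]_n) a :
  P \in unitmx -> eigenvalue (invmx P *m f *m P) a = eigenvalue f a.
Proof.
move=> P_unit; have stable V g : V \in unitmx -> stablemx V g.
  by move=> V_unit; rewrite submx_full // row_full_unit.
rewrite -conjVmx //; apply/idP/idP => [|f_a].
  by apply: eigenvalue_conjmx; rewrite ?stable ?row_free_unit ?unitmx_inv.
rewrite -[f](conjmxVK _ P_unit) in f_a.
by apply: eigenvalue_conjmx f_a; rewrite ?stable ?row_free_unit.
Qed.

End Eigenvalues.

Section HermitianSpectrum.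
Context {R : realType} {n : nat} (A : 'M[R[i]]_n).
Hypothesis hermA : A ^t* = A.
Implicit Types v : 'cV[R[i]]_n.

Let P := spectralmx A.
Let D := spectral_diag A.
Let d j := complex.Re (D 0 j).

Let P_unitary : P \is unitarymx := spectral_unitarymx A.
Let P_unit : P \in unitmx := spectral_unit A.

Let A_hermsym : A \is hermsymmx.
Proof. by apply/is_hermitianmxP; rewrite expr0 scale1r hermA. Qed.

Let A_spectral : A = invmx P *m diag_mx D *m P.
Proof. exact/orthomx_spectralP/hermitian_normalmx. Qed.

Let D_real j : D 0 j = ((d j)%:C)%C.
Proof.
by apply/esym/RRe_real; move/mxOverP: (hermitian_spectral_diag_real A_hermsym); apply.
Qed.

Lemma eigenvalue_hermitian x : eigenvalue A (x%:C)%C <-> exists j, x = d j.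
Proof.
rewrite {1}A_spectral eigenvalue_conj_unitmx // eigenvalue_diag_mx.
by split=> [] [j x_j]; exists j; [apply: complexI; rewrite -D_real | rewrite D_real x_j].
Qed.

Lemma le_lambda_max j : d j <= lambda_max A.
Proof.
apply: sup_upper_bound; last exact/eigenvalue_hermitian/(ex_intro _ j).
split; first by exists (d j); apply/eigenvalue_hermitian; exists j.
exists (\sum_k `|d k|) => _ /eigenvalue_hermitian [k ->].
apply: le_trans (ler_norm _) _; rewrite (bigD1 k) //= lerDl.
by apply: sumr_ge0 => i _.
Qed.

Lemma hermitian_quadE v :
  (v ^t* *m A *m v) 0 0 = ((\sum_j d j * normc ((P *m v) j 0) ^+ 2)%:C)%C.
Proof.
rewrite {1}A_spectral invmx_unitary // !mulmxA -map_mxM -trmx_mul -mulmxA.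
rewrite mxE rmorph_sum; apply: eq_bigr => j _.
rewrite mul_mx_diag !mxE rmorphM /= -D_real -mulc_conj; ring.
Qed.

Lemma hermitian_quad_le_lambda_max v q :
  (v ^t* *m A *m v) 0 0 = (q%:C)%C -> q <= lambda_max A * vnorm2 v ^+ 2.
Proof.
rewrite hermitian_quadE => /complexI <-.
rewrite -(vnorm2_unitary v P_unitary) sqr_vnorm2 mulr_sumr.
by apply: ler_sum => j _; rewrite ler_wpM2r ?sqr_ge0 ?le_lambda_max.
Qed.

End HermitianSpectrum.

Lemma chi_le_lambda_max (R : realType) Md N (H : 'M[R[i]]_(Md, N)) (r : 'cV[R[i]]_Md) :
  vnorm2 r = 1 -> chi H r <= lambda_max (H *m mxH H).
Proof.
move=> r_unit; rewrite mxHE -[lambda_max _]mulr1 -(expr1n _ 2) -r_unit.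
apply: hermitian_quad_le_lambda_max; first by rewrite trmx_mul map_mxM trmxCK.
by rewrite chi_vnorm2 -dotmx_vnorm2 trmx_mul map_mxM trmxCK !mulmxA.
Qed.

Theorem proposition1 (R : realType) (N Md : nat) (hN : (0 < N)%N) (hMd : (0 < Md)%N)
  (eps : R) (heps : 0 <= eps) (H : 'M[R[i]]_(Md, N)) (r : 'cV[R[i]]_Md)
  (hr : vnorm2 r = 1) :
  (0 < Omega H r eps <-> eps < Num.sqrt (chi H r)) /\
  Num.sqrt (chi H r) <= Num.sqrt (lambda_max (H *m mxH H)).
Proof.
split; first exact: Omega_gt0_iff.
exact/ler_wsqrtr/chi_le_lambda_max.
Qed.
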